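(* Let $q\in(-\infty,q_1)$ and let $P^{u,+}(q)$, $P^{u,-}(q)$ be the limits of $P_1^u(q-i\eta)$, resp. $P_1^u(q+i\eta)$, as $\eta\downarrow0$ (these are complex conjugate), and define $P^{v,\pm}(q)$ similarly from $P_1^v$. Suppose complex numbers $m(q),n(q),E$ and values $\ell_1(P^{u,\pm}(q))$, $\ell_2(P^{v,\pm}(q))$ satisfy, for both signs $\pm$, $$A(P^{u,\pm}(q),q)\,m(q)+\theta\,n(q)+C(P^{u,\pm}(q),q)\,\ell_1(P^{u,\pm}(q))+E=0,$$ $$B(P^{v,\pm}(q),q)\,m(q)-\theta\,n(q)+D(P^{v,\pm}(q),q)\,\ell_2(P^{v,\pm}(q))-E=0.$$ Put $\alpha=A(P^{u,+}(q),q)$, $\beta=B(P^{v,+}(q),q)$, $\gamma=C(P^{u,+}(q),q)$, $\delta=D(P^{v,+}(q),q)$ (so that $\bar\alpha=A(P^{u,-}(q),q)$ etc.), $\Delta(q)=-(\alpha+\beta)=-\theta(q+P^{u,+}(q)+P^{v,+}(q))$, and assume $\gamma\ne0$, $\delta\neq0$, $\Delta(q)\ne0$. Then, with $L^\pm(q)=\big(\ell_1(P^{u,\pm}(q)),\ell_2(P^{v,\pm}(q))\big)^{T}$, $$L^+(q)=G(q)L^-(q),\qquad G(q)=\frac{1}{\overline{\Delta(q)}}\begin{pmatrix}-\frac{\bar\gamma(\alpha+\bar\beta)}{\gamma}&\frac{\bar\delta(\bar\alpha-\alpha)}{\gamma}\\[2pt]\frac{\bar\gamma(\bar\beta-\b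eta)}{\delta}&-\frac{\bar\delta(\beta+\bar\alpha)}{\delta}\end{pmatrix}.$$
   Context: $\sigma_1,\sigma_2,\rho$ real with $\sigma_1\sigma_2-\rho^2>0$, $\theta=\frac{\sigma_1+\sigma_2-2\rho}{2}$, $\mu_1,\mu_2,r_1,r_2$ real. $U(p,q)=\theta p^2+\frac{\sigma_2}{2}q^2+(\sigma_2-\rho)pq+(\mu_2-\mu_1)p+\mu_2q$, $V(p,q)=\theta p^2+\frac{\sigma_1}{2}q^2+(\sigma_1-\rho)pq+(\mu_1-\mu_2)p+\mu_1q$; $A(p,q)=\frac{\theta(2p+q)}{2}+\frac{(\sigma_2-\sigma_1)q}{2}+\mu_2-\mu_1$, $B(p,q)=\frac{\theta(2p+q)}{2}+\frac{(\sigma_1-\sigma_2)q}{2}+\mu_1-\mu_2$, $C(p,q)=(1-r_1)p+q$, $D(p,q)=(1-r_2)p+q$. $q_1\le q_2$ are the real roots of $(\rho^2-\sigma_1\sigma_2)q^2+2[\mu_1(\rho-\sigma_2)+\mu_2(\rho-\sigma_1)]q+(\mu_1-\mu_2)^2=0$; $P_1^u$ (resp. $P_1^v$) is the root in $p$ of $U(p,q)=0$ (resp. $V(p,q)=0$) with the smaller real part, analytic on $\mathbb{C}\setminus((-\infty,q_1]\cup[q_2,\infty))$. In the application, $m,n$ are the diagonal Laplace transforms of the stationary density, $E$ a constant, and $\ell_1(p)=\int_{-\infty}^0e^{-pz}\nu_1(z)\mathrm{d}z$, $\ell_2(p)=\int_{-\infty}^0e^{-pz}\nu_2(z)\mathrm{d}z$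 (continued meromorphically) for the reflected Brownian motion in the three-quarter plane. *)

From Stdlib Require Import Reals ClassicalEpsilon.
From Coquelicot Require Import Coquelicot.
Open Scope R_scope.

Definition theta (s1 s2 rho : R) : R := (s1 + s2 - 2 * rho) / 2.

Open Scope C_scope.

Definition Uf (s1 s2 rho mu1 mu2 : R) (p q : C) : C :=
  RtoC (theta s1 s2 rho) * p * p + RtoC (s2 / 2) * q * q
  + RtoC (s2 - rho) * p * q + RtoC (mu2 - mu1) * p + RtoC mu2 * q.

Definition Vf (s1 s2 rho mu1 mu2 : R) (p q : C) : C :=
  RtoC (theta s1 s2 rho) * p * p + RtoC (s1 / 2) * q * q
  + RtoC (s1 - rho) * p * q + RtoC (mu1 - mu2) * p + RtoC mu1 * q.

Definition Af (s1 s2 rho mu1 mu2 : R) (p q : C) : C :=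
  RtoC (theta s1 s2 rho) * (2 * p + q) / 2 + RtoC (s2 - s1) * q / 2
  + RtoC (mu2 - mu1).

Definition Bf (s1 s2 rho mu1 mu2 : R) (p q : C) : C :=
  RtoC (theta s1 s2 rho) * (2 * p + q) / 2 + RtoC (s1 - s2) * q / 2
  + RtoC (mu1 - mu2).

Definition Cf (r1 : R) (p q : C) : C := RtoC (1 - r1) * p + q.
Definition Df (r2 : R) (p q : C) : C := RtoC (1 - r2) * p + q.

(* The root in p of K(p, z) = 0 having the smallest real part (chosen by
   Hilbert's epsilon; on the branch cuts, where the two roots have equal real
   parts, the choice is arbitrary -- it is irrelevant for the limits). *)
Definition small_root (K : C -> C -> C) (z : C) : C :=
  epsilon (inhabits (RtoC 0))
    (fun p => K p z = 0 /\ forall p', K p' z = 0 -> (Re p <= Re p')%R).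

Definition P1u (s1 s2 rho mu1 mu2 : R) : C -> C :=
  small_root (Uf s1 s2 rho mu1 mu2).
Definition P1v (s1 s2 rho mu1 mu2 : R) : C -> C :=
  small_root (Vf s1 s2 rho mu1 mu2).

Close Scope C_scope.

(* q1 = the smaller real root of
   (rho^2 - s1 s2) q^2 + 2[mu1(rho - s2) + mu2(rho - s1)] q + (mu1 - mu2)^2 = 0.
   The leading coefficient is < 0 and the discriminant is >= 0, so the smaller
   root is (-b + sqrt disc) / (2a). *)
Definition q1 (s1 s2 rho mu1 mu2 : R) : R :=
  let a := rho ^ 2 - s1 * s2 in
  let b := 2 * (mu1 * (rho - s2) + mu2 * (rho - s1)) in
  let c := (mu1 - mu2) ^ 2 in
  (- b + sqrt (b ^ 2 - 4 * a * c)) / (2 * a).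

Definition mat2 : Type := ((C * C) * (C * C))%type.
Definition mulmv (M : mat2) (v : C * C) : C * C :=
  let '((a, b), (c, d)) := M in
  let '(x, y) := v in ((a * x + b * y)%C, (c * x + d * y)%C).

Definition DeltaC (al be : C) : C := (- (al + be))%C.

Definition Gmat (al be ga de : C) : mat2 :=
  let Db := Cconj (DeltaC al be) in
  ((((- (Cconj ga * (al + Cconj be)) / ga) / Db)%C,
    ((Cconj de * (Cconj al - al) / ga) / Db)%C),
   (((Cconj ga * (Cconj be - be) / de) / Db)%C,
    ((- (Cconj de * (be + Cconj al)) / de) / Db)%C)).

(* Analytic half: both kernels U and V are instances of the quadratic
   K(p, z) = th p^2 + k2 z^2 + k1 p z + k0 p + k3 z with real coefficients.
   Completing the square, 4 th K = (2 th p + b(z))^2 - disc(z); so K(., z) has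
   two roots, K(conj p, conj z) = conj K(p, z), and two distinct roots with the
   same real part force disc(z) to be real.  Hence, wherever Im disc(z) <> 0,
   the root of smallest real part commutes with conjugation.  On the vertical
   line z = q - i eta (eta > 0) one has Im disc = -eta (2 a q + b) for both U
   and V, and q < q1 makes 2 a q + b > 0; passing to the limit eta -> 0+ gives
   P^{u,-} = conj P^{u,+} and P^{v,-} = conj P^{v,+}.
   Algebraic half: A, B, C, D commute with conjugation, so the four boundary
   equations form a linear system in (l1, l2)(P^{.,+}) whose solution,
   eliminating m, n, E, is exactly G(q) L^-(q). *)
From Stdlib Require Import Reals ClassicalEpsilon Lra Psatz.
From Coquelicot Require Import Coquelicot.
Open Scope R_scope.

Lemma C_pair_eq (a b : C) : fst a = fst b -> snd a = snd b -> a = b.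
Proof. destruct a, b; simpl; intros; subst; reflexivity. Qed.

Lemma Cmult_integral (a b : C) : (a * b = 0)%C -> a = 0%C \/ b = 0%C.
Proof.
  intros Hab.
  destruct (Ceq_dec a 0) as [Ha | Ha]; [now left |].
  destruct (Ceq_dec b 0) as [Hb | Hb]; [now right |].
  now destruct (Cmult_neq_0 a b Ha Hb).
Qed.

Lemma Cminus_eq0 (a b : C) : (a - b = 0)%C -> a = b.
Proof. intros H. transitivity (b + (a - b))%C; [ring | rewrite H; ring]. Qed.

Lemma RtoC_neq0 (r : R) : r <> 0 -> RtoC r <> 0%C.
Proof. intros Hr E. apply Hr. now injection E. Qed.

(* Every complex number is a square: s = sqrt((|w|+x)/2) +/- i sqrt((|w|-x)/2). *)
Lemma Csqrt_exists (w : C) : exists s : C, (s * s)%C = w.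
Proof.
  destruct w as [x y].
  set (r := sqrt (x * x + y * y)).
  assert (Hr2 : r * r = x * x + y * y) by (apply sqrt_sqrt; nra).
  assert (Hrx : Rabs x <= r).
  { rewrite <- sqrt_Rsqr_abs. apply sqrt_le_1_alt. unfold Rsqr. nra. }
  pose proof (Rle_abs x). pose proof (Rle_abs (- x)). rewrite Rabs_Ropp in *.
  set (u := sqrt ((r + x) / 2)). set (v := sqrt ((r - x) / 2)).
  assert (Hu : u * u = (r + x) / 2) by (apply sqrt_sqrt; lra).
  assert (Hv : v * v = (r - x) / 2) by (apply sqrt_sqrt; lra).
  assert (Huv : 0 <= 2 * u * v) by (pose proof (sqrt_pos ((r + x) / 2));
                                     pose proof (sqrt_pos ((r - x) / 2)); unfold u, v; nra).
  assert (Huv2 : (2 * u * v) * (2 * u * v) = y * y) by nra.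
  destruct (Rle_dec 0 y).
  - exists (u, v). apply C_pair_eq; simpl; nra.
  - exists (u, - v). apply C_pair_eq; simpl; nra.
Qed.

Lemma Cconj_continuous (x : C) : filterlim Cconj (locally x) (locally (Cconj x)).
Proof.
  apply filterlim_locally. intros eps. exists eps.
  intros [y1 y2] [H1 H2]. destruct x as [x1 x2]. split; [exact H1 |].
  revert H2. unfold ball; simpl. unfold AbsRing_ball, abs, minus, plus, opp; simpl.
  replace (- y2 + - - x2) with (- (y2 + - x2)) by ring. now rewrite Rabs_Ropp.
Qed.

Lemma filterlim_conj_unique (f g : R -> C) (lf lg : C) :
  (forall eta, 0 < eta -> g eta = Cconj (f eta)) ->
  filterlim f (at_right 0) (locally lf) -> filterlim g (at_right 0) (locally lg) ->
  lg = Cconj lf.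
Proof.
  intros Hfg Hf Hg.
  apply (filterlim_locally_unique (F := at_right 0) g); [exact Hg |].
  apply (filterlim_ext_loc (fun eta => Cconj (f eta))).
  - exists (mkposreal 1 Rlt_0_1). intros y _ Hy. symmetry. now apply Hfg.
  - eapply filterlim_comp; [exact Hf | apply Cconj_continuous].
Qed.

Section RealQuadratic.

Variables th k2 k1 k0 k3 : R.

Definition Kquad (p z : C) : C :=
  (RtoC th * p * p + RtoC k2 * z * z + RtoC k1 * p * z + RtoC k0 * p + RtoC k3 * z)%C.

Definition lin_coef (z : C) : C := (RtoC k1 * z + RtoC k0)%C.
Definition disc (z : C) : C :=
  (lin_coef z * lin_coef z - 4 * RtoC th * (RtoC k2 * z * z + RtoC k3 * z))%C.

Lemma Kquad_conj (p z : C) : Kquad (Cconj p) (Cconj z) = Cconj (Kquad p z).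
Proof. destruct p, z; unfold Kquad, Cconj, Cmult, Cplus, RtoC; apply C_pair_eq; simpl; ring. Qed.

Lemma Kquad_complete_square (p z : C) :
  (4 * RtoC th * Kquad p z =
   (2 * RtoC th * p + lin_coef z) * (2 * RtoC th * p + lin_coef z) - disc z)%C.
Proof. unfold Kquad, disc, lin_coef. ring. Qed.

Lemma disc_Im_vertical (q eta : R) :
  Im (disc (RtoC q - RtoC eta * Ci)%C) =
  - eta * (2 * k1 ^ 2 * q + 2 * k1 * k0 - 8 * th * k2 * q - 4 * th * k3).
Proof. unfold disc, lin_coef, Im, RtoC, Ci, Cmult, Cplus, Cminus, Copp; simpl. ring. Qed.

(* Two distinct roots with equal real parts differ by an imaginary number w,
   and disc = th^2 w^2 is then real. *)
Lemma Kquad_same_real_part (p p' z : C) :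
  Kquad p z = 0%C -> Kquad p' z = 0%C -> p <> p' -> Re p = Re p' -> Im (disc z) = 0.
Proof.
  intros Hp Hp' Hne HRe.
  set (S := (RtoC th * (p + p') + lin_coef z)%C).
  assert (Hdiff : ((p - p') * S = 0)%C).
  { transitivity (Kquad p z - Kquad p' z)%C.
    - unfold S, Kquad, lin_coef. ring.
    - rewrite Hp, Hp'. ring. }
  destruct (Cmult_integral _ _ Hdiff) as [E | HS].
  { exfalso. apply Hne. rewrite <- (Cplus_0_r p'), <- E. ring. }
  assert (Hdisc : disc z = (RtoC th * RtoC th * (p - p') * (p - p'))%C).
  { transitivity (RtoC th * RtoC th * (p - p') * (p - p')
                  + S * (S + 2 * RtoC th * (p - p')) - 4 * RtoC th * Kquad p z)%C.
    - unfold S, disc, Kquad, lin_coef. ring.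
    - rewrite HS, Hp. ring. }
  rewrite Hdisc. destruct p as [a1 b1], p' as [a2 b2]. simpl in HRe. subst a2.
  unfold Im, RtoC, Cmult, Cminus, Cplus, Copp; simpl. ring.
Qed.

Hypothesis th_neq0 : th <> 0.

(* For th <> 0, K(., z) has exactly the two roots (+/- s - b) / (2 th), s^2 = disc. *)
Lemma Kquad_two_roots (z : C) :
  exists r r' : C, forall p, Kquad p z = 0%C <-> p = r \/ p = r'.
Proof.
  assert (Hth : RtoC th <> 0%C) by now apply RtoC_neq0.
  assert (H4th : (4 * RtoC th)%C <> 0%C) by (apply Cmult_neq_0; [apply RtoC_neq0; lra | exact Hth]).
  destruct (Csqrt_exists (disc z)) as [s Hs].
  set (b := lin_coef z).
  exists ((s - b) / (2 * RtoC th))%C, ((- s - b) / (2 * RtoC th))%C. intros p.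
  set (t := (2 * RtoC th * p + b)%C).
  assert (Hfactor : (4 * RtoC th * Kquad p z = (t - s) * (t + s))%C).
  { rewrite Kquad_complete_square, <- Hs. unfold t, b. ring. }
  split.
  - intros Hp. rewrite Hp, Cmult_0_r in Hfactor. symmetry in Hfactor.
    destruct (Cmult_integral _ _ Hfactor) as [E | E]; [left | right];
      (transitivity (2 * RtoC th * p / (2 * RtoC th))%C; [field; auto | f_equal]);
      apply Cminus_eq0; rewrite <- E; unfold t; ring.
  - intros Hr. assert (Ht : ((t - s) * (t + s) = 0)%C).
    { destruct Hr as [-> | ->]; unfold t; field; auto. }
    rewrite Ht in Hfactor.
    destruct (Cmult_integral _ _ Hfactor) as [E | E]; [contradiction | exact E].
Qed.

Lemma small_root_spec (z : C) :
  Kquad (small_root Kquad z) z = 0%C /\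
  forall p, Kquad p z = 0%C -> Re (small_root Kquad z) <= Re p.
Proof.
  apply (epsilon_spec (inhabits (RtoC 0))
           (fun p => Kquad p z = 0%C /\ forall p', Kquad p' z = 0%C -> Re p <= Re p')).
  destruct (Kquad_two_roots z) as [r [r' Hroots]].
  destruct (Rle_dec (Re r) (Re r')); [exists r | exists r'];
    (split; [apply Hroots; auto | intros p' Hp'; apply Hroots in Hp'; destruct Hp'; subst; lra]).
Qed.

Lemma small_root_conj (z : C) : Im (disc z) <> 0 ->
  small_root Kquad (Cconj z) = Cconj (small_root Kquad z).
Proof.
  intros Hdisc.
  set (w := small_root Kquad z). set (w' := small_root Kquad (Cconj z)).
  destruct (small_root_spec z) as [Hw Hwmin].
  destruct (small_root_spec (Cconj z)) as [Hw' Hw'min]. fold w w' in Hw, Hwmin, Hw', Hw'min.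
  assert (Hcw : Kquad (Cconj w) (Cconj z) = 0%C).
  { rewrite Kquad_conj, Hw. apply C_pair_eq; simpl; lra. }
  assert (Hcw' : Kquad (Cconj w') z = 0%C).
  { rewrite <- (Cconj_conj z), Kquad_conj, Hw'. apply C_pair_eq; simpl; lra. }
  pose proof (Hw'min _ Hcw) as Hle1. pose proof (Hwmin _ Hcw') as Hle2.
  rewrite re_conj in Hle1, Hle2.
  destruct (Ceq_dec w (Cconj w')) as [E | Hne].
  - now rewrite E, Cconj_conj.
  - exfalso. apply Hdisc, (Kquad_same_real_part w (Cconj w') z); auto.
    rewrite re_conj. lra.
Qed.

Lemma small_root_boundary_conj (q : R) (Pp Pm : C) :
  (forall eta, 0 < eta -> Im (disc (RtoC q - RtoC eta * Ci)%C) <> 0) ->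
  filterlim (fun eta : R => small_root Kquad (RtoC q - RtoC eta * Ci)%C)
    (at_right 0) (locally Pp) ->
  filterlim (fun eta : R => small_root Kquad (RtoC q + RtoC eta * Ci)%C)
    (at_right 0) (locally Pm) ->
  Pm = Cconj Pp.
Proof.
  intros Hdisc Hp Hm. refine (filterlim_conj_unique _ _ _ _ _ Hp Hm).
  intros eta Heta; simpl. replace (RtoC q + RtoC eta * Ci)%C with (Cconj (RtoC q - RtoC eta * Ci)%C)
    by (apply C_pair_eq; simpl; ring).
  now apply small_root_conj, Hdisc.
Qed.

End RealQuadratic.

(* The non-degeneracy s1 s2 > rho^2 forces theta <> 0, since
   theta = 0 would give rho^2 = ((s1 + s2) / 2)^2 >= s1 s2. *)
Lemma theta_neq0 (s1 s2 rho : R) : s1 * s2 - rho ^ 2 > 0 -> theta s1 s2 rho <> 0.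
Proof.
  intros Hcov Hth. unfold theta in Hth. simpl in Hcov.
  assert (Hrho : rho = (s1 + s2) / 2) by lra. subst rho.
  pose proof (Rle_0_sqr (s1 - s2)). unfold Rsqr in *. nra.
Qed.

(* The linear polynomial whose sign controls whether disc is real: for both
   kernels U and V, Im disc(q - i eta) = - eta * branch_lin q. *)
Definition branch_lin (s1 s2 rho mu1 mu2 q : R) : R :=
  2 * (rho ^ 2 - s1 * s2) * q + 2 * (mu1 * (rho - s2) + mu2 * (rho - s1)).

Lemma U_disc_Im (s1 s2 rho mu1 mu2 q eta : R) :
  Im (disc (theta s1 s2 rho) (s2 / 2) (s2 - rho) (mu2 - mu1) mu2 (RtoC q - RtoC eta * Ci)%C)
  = - eta * branch_lin s1 s2 rho mu1 mu2 q.
Proof. rewrite disc_Im_vertical. unfold branch_lin, theta. field. Qed.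

Lemma V_disc_Im (s1 s2 rho mu1 mu2 q eta : R) :
  Im (disc (theta s1 s2 rho) (s1 / 2) (s1 - rho) (mu1 - mu2) mu1 (RtoC q - RtoC eta * Ci)%C)
  = - eta * branch_lin s1 s2 rho mu1 mu2 q.
Proof. rewrite disc_Im_vertical. unfold branch_lin, theta. field. Qed.

(* q1 is the root of the concave quadratic whose derivative is branch_lin;
   to the left of its smaller root the quadratic increases strictly. *)
Lemma branch_lin_pos (s1 s2 rho mu1 mu2 q : R) :
  s1 * s2 - rho ^ 2 > 0 -> q < q1 s1 s2 rho mu1 mu2 -> branch_lin s1 s2 rho mu1 mu2 q > 0.
Proof.
  intros Hcov Hq. unfold q1 in Hq. unfold branch_lin.
  set (a := rho ^ 2 - s1 * s2) in *.
  set (b := 2 * (mu1 * (rho - s2) + mu2 * (rho - s1))) in *.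
  set (sq := sqrt (b ^ 2 - 4 * a * (mu1 - mu2) ^ 2)) in Hq.
  assert (Ha : 2 * a < 0) by (unfold a; lra).
  assert (Hsq : 0 <= sq) by apply sqrt_pos.
  apply (Rmult_lt_compat_l (- (2 * a))) in Hq; [| lra].
  replace (- (2 * a) * ((- b + sq) / (2 * a))) with (b - sq) in Hq by (field; lra).
  lra.
Qed.

Lemma vertical_disc_nonreal (s1 s2 rho mu1 mu2 q eta : R) :
  s1 * s2 - rho ^ 2 > 0 -> q < q1 s1 s2 rho mu1 mu2 -> 0 < eta ->
  - eta * branch_lin s1 s2 rho mu1 mu2 q <> 0.
Proof.
  intros Hcov Hq Heta. pose proof (branch_lin_pos _ _ _ _ _ _ Hcov Hq). nra.
Qed.

Lemma Af_conj s1 s2 rho mu1 mu2 p (q : R) :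
  Af s1 s2 rho mu1 mu2 (Cconj p) q = Cconj (Af s1 s2 rho mu1 mu2 p q).
Proof. destruct p. unfold Af, Cconj, Cdiv, Cinv, Cmult, Cplus, RtoC; apply C_pair_eq; simpl; field. Qed.
Lemma Bf_conj s1 s2 rho mu1 mu2 p (q : R) :
  Bf s1 s2 rho mu1 mu2 (Cconj p) q = Cconj (Bf s1 s2 rho mu1 mu2 p q).
Proof. destruct p. unfold Bf, Cconj, Cdiv, Cinv, Cmult, Cplus, RtoC; apply C_pair_eq; simpl; field. Qed.
Lemma Cf_conj r p (q : R) : Cf r (Cconj p) q = Cconj (Cf r p q).
Proof. destruct p. unfold Cf, Cconj, Cmult, Cplus, RtoC; apply C_pair_eq; simpl; ring. Qed.
Lemma Df_conj r p (q : R) : Df r (Cconj p) q = Cconj (Df r p q).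
Proof. destruct p. unfold Df, Cconj, Cmult, Cplus, RtoC; apply C_pair_eq; simpl; ring. Qed.

Open Scope C_scope.

Lemma boundary_system_solution (al be ga de m n E x1 x2 y1 y2 T : C) :
  al * m + T * n + ga * x1 + E = 0 ->
  Cconj al * m + T * n + Cconj ga * y1 + E = 0 ->
  be * m - T * n + de * x2 - E = 0 ->
  Cconj be * m - T * n + Cconj de * y2 - E = 0 ->
  ga <> 0 -> de <> 0 -> DeltaC al be <> 0 ->
  (x1, x2) = mulmv (Gmat al be ga de) (y1, y2).
Proof.
  intros Hu Hum Hv Hvm Hga Hde HD. unfold mulmv, Gmat.
  assert (HDb : Cconj (DeltaC al be) = - (Cconj al + Cconj be)).
  { unfold DeltaC. now rewrite Copp_conj, Cplus_conj. }
  assert (HDb0 : Cconj (DeltaC al be) <> 0).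
  { intro Z. apply HD. rewrite <- (Cconj_conj (DeltaC al be)), Z.
    apply C_pair_eq; simpl; lra. }
  rewrite HDb in *.
  set (Db := - (Cconj al + Cconj be)) in *.
  (* Combining the equations kills m, n and E. *)
  assert (Hx1 : ga * Db * x1 =
               - (Cconj ga * (al + Cconj be)) * y1 + Cconj de * (Cconj al - al) * y2).
  { apply Cminus_eq0.
    transitivity (Db * ((al * m + T * n + ga * x1 + E)
                        - (Cconj al * m + T * n + Cconj ga * y1 + E))
                  + (al - Cconj al) * ((Cconj al * m + T * n + Cconj ga * y1 + E)
                                       + (Cconj be * m - T * n + Cconj de * y2 - E))).
    - unfold Db. ring.
    - rewrite Hu, Hum, Hvm. ring. }
  assert (Hx2 : de * Db * x2 =
               Cconj ga * (Cconj be - be) * y1 - Cconj de * (be + Cconj al) * y2).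
  { apply Cminus_eq0.
    transitivity (Db * ((be * m - T * n + de * x2 - E)
                        - (Cconj be * m - T * n + Cconj de * y2 - E))
                  + (be - Cconj be) * ((Cconj al * m + T * n + Cconj ga * y1 + E)
                                       + (Cconj be * m - T * n + Cconj de * y2 - E))).
    - unfold Db. ring.
    - rewrite Hv, Hum, Hvm. ring. }
  f_equal.
  - transitivity (ga * Db * x1 / (ga * Db)); [field; auto | rewrite Hx1; field; auto].
  - transitivity (de * Db * x2 / (de * Db)); [field; auto | rewrite Hx2; field; auto].
Qed.

Close Scope C_scope.

Theorem theorem4p4
  (s1 s2 rho mu1 mu2 r1 r2 : R) (Hcov : s1 * s2 - rho ^ 2 > 0)
  (q : R) (Hq : q < q1 s1 s2 rho mu1 mu2)
  (Pup Pum Pvp Pvm : C)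
  (HPup : filterlim (fun eta : R => P1u s1 s2 rho mu1 mu2 (RtoC q - RtoC eta * Ci)%C)
            (at_right 0) (locally Pup))
  (HPum : filterlim (fun eta : R => P1u s1 s2 rho mu1 mu2 (RtoC q + RtoC eta * Ci)%C)
            (at_right 0) (locally Pum))
  (HPvp : filterlim (fun eta : R => P1v s1 s2 rho mu1 mu2 (RtoC q - RtoC eta * Ci)%C)
            (at_right 0) (locally Pvp))
  (HPvm : filterlim (fun eta : R => P1v s1 s2 rho mu1 mu2 (RtoC q + RtoC eta * Ci)%C)
            (at_right 0) (locally Pvm))
  (m n E : C) (l1 l2 : C -> C)
  (Hup : (Af s1 s2 rho mu1 mu2 Pup q * m + RtoC (theta s1 s2 rho) * n
          + Cf r1 Pup q * l1 Pup + E = 0)%C)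
  (Hum : (Af s1 s2 rho mu1 mu2 Pum q * m + RtoC (theta s1 s2 rho) * n
          + Cf r1 Pum q * l1 Pum + E = 0)%C)
  (Hvp : (Bf s1 s2 rho mu1 mu2 Pvp q * m - RtoC (theta s1 s2 rho) * n
          + Df r2 Pvp q * l2 Pvp - E = 0)%C)
  (Hvm : (Bf s1 s2 rho mu1 mu2 Pvm q * m - RtoC (theta s1 s2 rho) * n
          + Df r2 Pvm q * l2 Pvm - E = 0)%C)
  (Hga : Cf r1 Pup q <> RtoC 0)
  (Hde : Df r2 Pvp q <> RtoC 0)
  (HDelta : DeltaC (Af s1 s2 rho mu1 mu2 Pup q) (Bf s1 s2 rho mu1 mu2 Pvp q) <> RtoC 0) :
  (l1 Pup, l2 Pvp) =
  mulmv (Gmat (Af s1 s2 rho mu1 mu2 Pup q) (Bf s1 s2 rho mu1 mu2 Pvp q)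
              (Cf r1 Pup q) (Df r2 Pvp q))
        (l1 Pum, l2 Pvm).
Proof.
  pose proof (theta_neq0 _ _ _ Hcov) as Hth.
  assert (HPum_conj : Pum = Cconj Pup).
  { apply (small_root_boundary_conj _ (s2 / 2) (s2 - rho) (mu2 - mu1) mu2 Hth q); auto.
    intros eta Heta. rewrite U_disc_Im. now apply vertical_disc_nonreal. }
  assert (HPvm_conj : Pvm = Cconj Pvp).
  { apply (small_root_boundary_conj _ (s1 / 2) (s1 - rho) (mu1 - mu2) mu1 Hth q); auto.
    intros eta Heta. rewrite V_disc_Im. now apply vertical_disc_nonreal. }
  subst Pum Pvm.
  rewrite Af_conj, Cf_conj in Hum. rewrite Bf_conj, Df_conj in Hvm.
  now apply (boundary_system_solution _ _ _ _ m n E _ _ _ _ (RtoC (theta s1 s2 rho))).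
Qed.
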